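(* Let $K=K_0\supset K_1\supset K_2\supset\cdots$ be a module with a decreasing filtration by submodules (with the convention $K_q=K_0$ for $q<0$), and for each integer $r\ge -1$ let $\partial_r:K\to K$ be a linear map with $\partial_r(K_p)\subset K_p$ for all $p$, $\partial_{-1}=0$, and $\partial_r\circ\partial_s=0$ for all $r,s\ge -1$. For $r\ge -1$ and integers $p$ put $Z^r_p=\{x\in K_p:\ \partial_r x\in K_{p+r}\}$. Assume the following property: for all $r\ge 0$ and all $p$, if $x\in Z^r_p$ or $x\in Z^{r-1}_p$, then $\partial_r x-\partial_{r-1}x\in Z^{r-1}_{p+r}$. For $r\ge 0$ define $$E^r_p=Z^r_p\big/\bigl(\partial_{r-1}Z^{r-1}_{p-r+1}+Z^{r-1}_{p+1}\bigr),\qquad E^r_\cdot=\bigoplus_p E^r_p .$$ Then for every $r\ge 0$ there is a differential $d^r$ on the graded module $E^r_\cdot$, induced by $\partial_r$ and mapping $E^r_p$ to $E^r_{p+r}$, such that the cohomology $H(E^r_\cdot)$ (in degree $p$: $\ker d^r_p/\operatorname{im} d^r_{p-r}$) is canonically isomorphic to $E^{r+1}_\cdot$ (degree by degree, $H^p(E^r_\cdot)\cong E^{r+1}_p$).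
   Context: The maps $\partial_r$ play the role of varying boundary operators converging in the filtration topology; the denominators in the definition of $E^r_p$ are submodules of $Z^r_p$ under the stated assumptions. *)

From HB Require Import structures.
From mathcomp Require Import all_boot all_order all_algebra.
Set Implicit Arguments. Unset Strict Implicit. Unset Printing Implicit Defensive.
Import Order.TTheory GRing.Theory Num.Theory.
Local Open Scope ring_scope.

(* Quotients are handled at the level of representatives:
   E^r_p = Zr r p / Bden r p.                                              *)
Section SpecSeq.
Variables (R : pzRingType) (K : lmodType R).
Variables (F : int -> {pred K}) (d : int -> {linear K -> K}).

Definition Zr (r p : int) : pred K :=
  [pred x | (x \in F p) && (d r x \in F (p + r))].

Definition in_sum (A B : K -> Prop) (x : K) : Prop :=
  exists a b, A a /\ B b /\ x = a + b.

Definition in_img (f : K -> K) (A : pred K) (x : K) : Prop :=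
  exists y, y \in A /\ x = f y.

Definition Bden (r p : int) (x : K) : Prop :=
  in_sum (in_img (d (r - 1)) (Zr (r - 1) (p - r + 1)))
         (fun z => z \in Zr (r - 1) (p + 1)) x.

(* representatives of ker d^r_p : E^r_p -> E^r_{p+r} *)
Definition Kerd (r p : int) (x : K) : Prop :=
  x \in Zr r p /\ Bden r (p + r) (d r x).

(* representatives of (im d^r_{p-r}) in E^r_p, lifted to Z^r_p:
   d_r Z^r_{p-r} + denominator of E^r_p *)
Definition Imd (r p : int) (x : K) : Prop :=
  in_sum (in_img (d r) (Zr r (p - r))) (Bden r p) x.

End SpecSeq.

From HB Require Import structures.
From mathcomp Require Import all_boot all_order all_algebra.
From mathcomp Require Import zify.
Import Order.TTheory GRing.Theory Num.Theory.
Local Open Scope ring_scope.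

(* The hypothesis on [d] says that on Z^r_p and on Z^{r-1}_p the maps d_r and
   d_{r-1} agree modulo K_{p+r}.  Hence Z^{r+1}_p is the set of x in K_p with
   d_r x in K_{p+r+1}, Z^r_p lies in Z^{r-1}_p, and Z^{r-1}_p lies in
   Z^r_{p-1}; so d_{r-1}-boundaries are d_r-boundaries up to an error in
   Z^{r-1}_{p+1}.  With these inclusions the classical computation goes
   through on representatives: a d^r-cycle x with d_r x = d_{r-1} y + a is
   corrected to x - y, which lies in Z^{r+1}_p; conversely a class of
   Z^{r+1}_p that is a d^r-boundary d_r a + d_{r-1} b + c is d_r (a + b) plus
   an element of Z^r_{p+1}. *)

Lemma int_ge_m1 (r : nat) : -1 <= r%:Z.
Proof. lia. Qed.

Lemma int_pred_ge_m1 (r : nat) : -1 <= r%:Z - 1.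
Proof. lia. Qed.

Local Hint Resolve int_ge_m1 int_pred_ge_m1 : core.

Section SpectralSequencePages.
Variables (R : pzRingType) (K : lmodType R).
Variables (F : int -> {pred K}) (d : int -> {linear K -> K}).
Hypothesis F_submod : forall p, submod_closed (F p).
Hypothesis F_succ : forall p, {subset F (p + 1) <= F p}.
Hypothesis dd0 : forall r s x, -1 <= r -> -1 <= s -> d r (d s x) = 0.
Hypothesis d_step : forall (r : nat) (p : int) (x : K),
  (x \in Zr F d r%:Z p \/ x \in Zr F d (r%:Z - 1) p) ->
  d r%:Z x - d (r%:Z - 1) x \in Zr F d (r%:Z - 1) (p + r%:Z).

Local Notation Z := (Zr F d).
Local Notation B := (Bden F d).

Lemma F0 p : 0 \in F p.
Proof. by case: (F_submod p). Qed.

Lemma FD p : {in F p &, forall u v, u + v \in F p}.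
Proof. exact: (GRing.zmod_closedD (F_submod p)).2. Qed.

Lemma FB p : {in F p &, forall u v, u - v \in F p}.
Proof. exact: (GRing.submod_closedB (F_submod p)).2. Qed.

Lemma F_le q q' : q <= q' -> {subset F q' <= F q}.
Proof.
move=> le_qq'; have [n ->] : exists n : nat, q' = q + n%:Z.
  by exists `|q' - q|%N; lia.
elim: n => [|n IHn] x; first by rewrite addr0.
by rewrite -addn1 PoszD addrA => /F_succ /IHn.
Qed.

Lemma ZrE r p x : (x \in Z r p) = (x \in F p) && (d r x \in F (p + r)).
Proof. by []. Qed.

Lemma Zr0 r p : 0 \in Z r p.
Proof. by rewrite ZrE linear0 !F0. Qed.

Lemma ZrD r p : {in Z r p &, forall u v, u + v \in Z r p}.
Proof.
move=> u v; rewrite !ZrE linearD => /andP[uF duF] /andP[vF dvF].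
by rewrite !FD.
Qed.

Lemma Zr_d r p x : -1 <= r -> x \in Z r p -> d r x \in Z r (p + r).
Proof. by move=> r_ge; rewrite !ZrE dd0 // F0 andbT => /andP[]. Qed.

Lemma d_stepF {r : nat} {p x} : x \in Z r p \/ x \in Z (r%:Z - 1) p ->
  d r%:Z x - d (r%:Z - 1) x \in F (p + r%:Z).
Proof. by move=> /d_step; rewrite ZrE => /andP[]. Qed.

Lemma Zr_dpredF {r : nat} {p x} : x \in Z r p -> d (r%:Z - 1) x \in F (p + r%:Z).
Proof.
move=> xZ; have stepF := d_stepF (or_introl xZ).
move: xZ; rewrite ZrE => /andP[_ dxF].
by rewrite -(subKr (d r%:Z x) (d (r%:Z - 1) x)) FB.
Qed.

Lemma Zr_subset_pred {r : nat} {p} : {subset Z r p <= Z (r%:Z - 1) p}.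
Proof.
move=> x xZ; have dxF := Zr_dpredF xZ.
by move: xZ; rewrite !ZrE => /andP[-> _] /=; apply: F_le dxF; lia.
Qed.

Lemma Zr_pred_subset {r : nat} {p} : {subset Z (r%:Z - 1) p <= Z r (p - 1)}.
Proof.
move=> x xZ; have stepF := d_stepF (or_intror xZ).
move: xZ; rewrite !ZrE => /andP[xF dxF]; apply/andP; split.
  by apply: F_le xF; lia.
rewrite -(subrK (d (r%:Z - 1) x) (d r%:Z x)) FD //.
  by apply: F_le stepF; lia.
by apply: F_le dxF; lia.
Qed.

Lemma Zr_succE (r : nat) p x :
  (x \in Z r.+1 p) = (x \in F p) && (d r x \in F (p + r%:Z + 1)).
Proof.
have succB1 : r.+1%:Z - 1 = r by lia.
apply/idP/andP => [xZ | [xF dxF]].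
  have := Zr_dpredF xZ; rewrite succB1 => dxF.
  by move: xZ; rewrite ZrE => /andP[xF _]; split => //; apply: F_le dxF; lia.
have xZ : x \in Z (r.+1%:Z - 1) p.
  by rewrite succB1 ZrE xF; apply: F_le dxF; lia.
have := d_stepF (or_intror xZ); rewrite succB1 => stepF.
by rewrite ZrE xF -(subrK (d r%:Z x) (d r.+1%:Z x)) FD //; apply: F_le dxF; lia.
Qed.

Lemma img0 r p : in_img (d r) (Z r p) 0.
Proof. by exists 0; rewrite Zr0 linear0. Qed.

Lemma Bden0 r p : B r p 0.
Proof. by exists 0, 0; rewrite Zr0 addr0; split; first exact: img0. Qed.

Lemma Bden_Zpred r p z : z \in Z (r - 1) (p + 1) -> B r p z.
Proof. by exists 0, z; rewrite add0r; split; first exact: img0. Qed.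

Lemma Imd_Bden r p x : B r p x -> Imd F d r p x.
Proof. by exists 0, x; rewrite add0r; split; first exact: img0. Qed.

Lemma Bden_d (r : nat) p x : B r p x -> B r (p + r%:Z) (d r x).
Proof.
case=> _ [b [[y [_ ->]] [bZ ->]]].
rewrite linearD dd0 // add0r.
exists (d (r%:Z - 1) b), (d r%:Z b - d (r%:Z - 1) b); split.
  by exists b; rewrite addrK.
split; last by rewrite addrC subrK.
by rewrite addrAC; apply: d_step; right.
Qed.

Lemma Kerd_Zr_succ (r : nat) p x : x \in Z r.+1 p -> Kerd F d r p x.
Proof.
rewrite Zr_succE => /andP[xF dxF]; split.
  by rewrite ZrE xF; apply: F_le dxF; lia.
by apply: Bden_Zpred; rewrite ZrE dxF dd0 // F0.
Qed.

Lemma Bden_succE (r : nat) p :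
  B r.+1 p = in_sum (in_img (d r) (Z r (p - r%:Z))) (fun z => z \in Z r (p + 1)).
Proof.
have succB1 : r.+1%:Z - 1 = r by lia.
have shift : p - r.+1%:Z + 1 = p - r%:Z by lia.
by rewrite /Bden succB1 shift.
Qed.

Lemma Imd_Bden_succ (r : nat) p x : B r.+1 p x -> Imd F d r p x.
Proof.
rewrite Bden_succE => -[_ [b [[y [yZ ->]] [bZ ->]]]].
exists (d r%:Z y), b; split; first by exists y.
by split => //; apply/Bden_Zpred/Zr_subset_pred.
Qed.

Lemma Bden_succ_of_Imd (r : nat) p x :
  x \in Z r.+1 p -> Imd F d r p x -> B r.+1 p x.
Proof.
move=> xZ [_ [_ [[a [aZ ->]] [[_ [c [[b [bZ ->]] [cZ ->]]]] x_eq]]]].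
set e := d r%:Z b - d (r%:Z - 1) b.
have eF : e \in F (p + 1) by apply: F_le (d_stepF (or_intror bZ)); lia.
have c_eq : c - e = x - d r%:Z (a + b).
  by rewrite x_eq /e [d r%:Z (a + b)]linearD opprB opprD addrACA subrr add0r addrCA addrA.
rewrite Bden_succE; exists (d r%:Z (a + b)), (c - e); split.
  exists (a + b); split => //; rewrite ZrD //.
  by have := Zr_pred_subset _ bZ; rewrite addrK.
split; last by rewrite c_eq addrC subrK.
move: cZ xZ; rewrite Zr_succE !ZrE => /andP[cF _] /andP[_ dxF].
rewrite FB //= c_eq linearB dd0 // subr0.
by apply: F_le dxF; lia.
Qed.

Lemma Kerd_lift (r : nat) p x :
  Kerd F d r p x -> exists y, y \in Z r.+1 p /\ Imd F d r p (x - y).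
Proof.
case=> xZ [_ [a [[y [yZ ->]] [aZ dx]]]]; rewrite addrK in yZ.
exists (x - y); split; last by rewrite subKr; apply/Imd_Bden/Bden_Zpred.
have stepF := d_stepF (or_intror yZ).
move: xZ yZ aZ; rewrite Zr_succE !ZrE => /andP[xF _] /andP[yF _] /andP[aF _].
rewrite FB //=; last by apply: F_le yF; lia.
rewrite linearB dx.
have -> : d (r%:Z - 1) y + a - d r%:Z y = a - (d r%:Z y - d (r%:Z - 1) y).
  by rewrite opprB addrA (addrC a).
by rewrite FB //; apply: F_le stepF; lia.
Qed.

End SpectralSequencePages.

Theorem mainTheorem4 (R : pzRingType) (K : lmodType R)
  (F : int -> {pred K}) (d : int -> {linear K -> K})
  (hFsub : forall p, submod_closed (F p))
  (hFdec : forall p, {subset F (p + 1) <= F p})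
  (hFneg : forall p, p <= 0 -> forall x, x \in F p)
  (hdF : forall r p x, -1 <= r -> x \in F p -> d r x \in F p)
  (hdm1 : forall x, d (-1) x = 0)
  (hdd : forall r s x, -1 <= r -> -1 <= s -> d r (d s x) = 0)
  (hprop : forall (r : nat) (p : int) (x : K),
     (x \in Zr F d r%:Z p \/ x \in Zr F d (r%:Z - 1) p) ->
     d r%:Z x - d (r%:Z - 1) x \in Zr F d (r%:Z - 1) (p + r%:Z)) :
  forall (r : nat) (p : int),
    (* d^r : E^r_p -> E^r_{p+r} induced by d_r is well defined *)
    (forall x, x \in Zr F d r%:Z p -> d r%:Z x \in Zr F d r%:Z (p + r%:Z)) /\
    (forall x, Bden F d r%:Z p x -> Bden F d r%:Z (p + r%:Z) (d r%:Z x)) /\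
    (* d^r o d^r = 0 *)
    (forall x, x \in Zr F d r%:Z p ->
       Bden F d r%:Z (p + r%:Z + r%:Z) (d r%:Z (d r%:Z x))) /\
    (* the canonical map E^{r+1}_p -> H^p(E^r), [x] |-> [x], is well defined *)
    (forall x, x \in Zr F d (r.+1)%:Z p -> Kerd F d r%:Z p x) /\
    (forall x, Bden F d (r.+1)%:Z p x -> Imd F d r%:Z p x) /\
    (* ... injective ... *)
    (forall x, x \in Zr F d (r.+1)%:Z p -> Imd F d r%:Z p x ->
       Bden F d (r.+1)%:Z p x) /\
    (* ... and surjective *)
    (forall x, Kerd F d r%:Z p x ->
       exists y, y \in Zr F d (r.+1)%:Z p /\ Imd F d r%:Z p (x - y)).
Proof.
move=> r p; split; first by move=> x; apply: Zr_d.
split; first by move=> x; apply: Bden_d.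
split; first by move=> x _; rewrite hdd //; apply: Bden0.
split; first by move=> x; apply: Kerd_Zr_succ.
split; first by move=> x; apply: Imd_Bden_succ.
split; first by move=> x; apply: Bden_succ_of_Imd.
by move=> x; apply: Kerd_lift.
Qed.
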